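(* For each positive integer $n$, the complex $CFK^\infty(\pm nT_{2,3})$ is filtered chain homotopy equivalent to $CFK^\infty(\pm T_{2,2n+1})\oplus A_{\pm n}$, where $A_{\pm n}$ is an acyclic complex over $\mathbb{F}[U]$.
   Context: $nT_{2,3}$ denotes the connected sum of $n$ copies of the trefoil $T_{2,3}$ and $-nT_{2,3}$ its mirror; $CFK^\infty$ is the full knot Floer complex over $\mathbb{F}[U,U^{-1}]$ with its $\mathbb{Z}\oplus\mathbb{Z}$ filtration. *)

From HB Require Import structures.
From mathcomp Require Import all_boot all_order all_algebra.
Set Implicit Arguments. Unset Strict Implicit. Unset Printing Implicit Defensive.
Import Order.TTheory GRing.Theory Num.Theory.
Local Open Scope ring_scope.

(* A finitely generated free complex over F_2[U,U^{-1}] with a homogeneous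
   filtered basis [gen]: the basis element x sits in Maslov grading [gr x]
   and at filtration level (i,j) = (0, alex x); U^m x has grading gr x - 2m
   and filtration level (-m, alex x - m).
   [dif y x] is the F_2-coefficient of (U^m y) in (d x); the exponent m is
   forced by the gradings: m = (gr y - gr x + 1)/2.  *)
Record fcomplex := FComplex {
  gen  : finType;
  gr   : gen -> int;
  alex : gen -> int;
  dif  : gen -> gen -> 'F_2 }.
Arguments dif : clear implicits.

(* f : {F[U,U^-1]-linear maps C -> D, homogeneous of degree delta}, given
   by coefficients f y x (y : gen D, x : gen C) of U^m y in f x, with
   m = (gr y - gr x - delta)/2.  [filtered_hom] : the coefficients are only
   nonzero when this m is an integer and U^m y lies in filtration level
   <= (0, alex x) componentwise. *)
Definition filtered_hom (C D : fcomplex) (delta : int)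
  (f : gen D -> gen C -> 'F_2) : Prop :=
  forall (y : gen D) (x : gen C), f y x != 0 ->
    let e := gr y - gr x - delta in
    [/\ (2 %| e)%Z, 0 <= (e %/ 2)%Z & alex y - (e %/ 2)%Z <= alex x].

Arguments filtered_hom : clear implicits.


(* composition of maps (the U-exponents add automatically) *)
Definition comp (A B C : fcomplex) (f : gen C -> gen B -> 'F_2)
  (g : gen B -> gen A -> 'F_2) : gen C -> gen A -> 'F_2 :=
  fun z x => \sum_(y : gen B) f z y * g y x.

Definition idm (C : fcomplex) : gen C -> gen C -> 'F_2 :=
  fun y x => (y == x)%:R.
Arguments idm : clear implicits.

Definition is_cfk (C : fcomplex) : Prop :=
  filtered_hom C C (-1) (dif C) /\
  forall z x, comp (dif C) (dif C) z x = 0.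

Definition chain_map (C D : fcomplex) (f : gen D -> gen C -> 'F_2) : Prop :=
  forall z x, comp f (dif C) z x = comp (dif D) f z x.
Arguments chain_map : clear implicits.

(* filtered (graded) chain homotopy equivalence; char 2 so signs vanish *)
Definition filt_htpy_equiv (C D : fcomplex) : Prop :=
  exists (f : gen D -> gen C -> 'F_2) (g : gen C -> gen D -> 'F_2)
         (hC : gen C -> gen C -> 'F_2) (hD : gen D -> gen D -> 'F_2),
  [/\ filtered_hom C D 0 f, filtered_hom D C 0 g,
      chain_map C D f & chain_map D C g] /\
  [/\ filtered_hom C C 1 hC, filtered_hom D D 1 hD,
      (forall z x, comp g f z x + idm C z x =
                   comp (dif C) hC z x + comp hC (dif C) z x) &
      (forall z x, comp f g z x + idm D z x =
                   comp (dif D) hD z x + comp hD (dif D) z x)].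

(* For a graded free complex over the graded
   field F[U,U^{-1}] (|U| = -2) this is equivalent to the vanishing of the
   homology of its gradings-{0,1} slice, an F_2-complex with basis one
   U-translate of each generator and matrix exactly [dif]. *)
Definition acyclic (C : fcomplex) : Prop :=
  forall v : gen C -> 'F_2,
    (forall z, \sum_(x : gen C) dif C z x * v x = 0) ->
    exists w : gen C -> 'F_2,
      forall z, v z = \sum_(x : gen C) dif C z x * w x.

Definition dsum (C D : fcomplex) : fcomplex :=
  @FComplex (gen C + gen D)%type
    (fun x => match x with inl a => gr a | inr b => gr b end)
    (fun x => match x with inl a => alex a | inr b => alex b end)
    (fun y x => match y, x with
                | inl a, inl b => dif C a b
                | inr a, inr b => dif D a b
                | _, _ => 0 end).

(* tensor product over F[U,U^{-1}] (Kunneth: CFK^oo(K1#K2) = tensor) *)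
Definition tens (C D : fcomplex) : fcomplex :=
  @FComplex (gen C * gen D)%type
    (fun x => gr x.1 + gr x.2)
    (fun x => alex x.1 + alex x.2)
    (fun y x => dif C y.1 x.1 * (y.2 == x.2)%:R +
                (y.1 == x.1)%:R * dif D y.2 x.2).

(* dual complex (CFK^oo of the mirror image) *)
Definition dual (C : fcomplex) : fcomplex :=
  @FComplex (gen C) (fun x => - gr x) (fun x => - alex x)
    (fun y x => dif C x y).

(* unknot complex: one generator in grading 0, Alexander 0 *)
Definition unit_cx : fcomplex :=
  @FComplex unit (fun _ => 0) (fun _ => 0) (fun _ _ => 0).

Fixpoint tpow (C : fcomplex) (n : nat) : fcomplex :=
  match n with 0 => unit_cx | k.+1 => tens (tpow C k) C end.

(* CFK^oo(T_{2,2n+1}): the staircase with generators x_0,...,x_{2n},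
   gr x_s = -s, A(x_s) = n - s, and  d x_s = U x_{s-1} + x_{s+1} for s odd,
   d x_s = 0 for s even. *)
Definition torus2 (n : nat) : fcomplex :=
  @FComplex 'I_(n.*2.+1)
    (fun s => - (nat_of_ord s)%:Z)
    (fun s => n%:Z - (nat_of_ord s)%:Z)
    (fun y x => if odd x && ((y.+1 == x :> nat) || (y == x.+1 :> nat))
                then 1 else 0).

Definition trefoil : fcomplex := torus2 1.
Definition CFK_nT23 (n : nat) : fcomplex := tpow trefoil n.
Definition CFK_mnT23 (n : nat) : fcomplex := tpow (dual trefoil) n.
Definition CFK_T2 (n : nat) : fcomplex := torus2 n.
Definition CFK_mT2 (n : nat) : fcomplex := dual (torus2 n).

(* By the Kunneth formula CFK(n T_{2,3}) is the n-fold tensor power of the trefoil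
   staircase, so everything follows by induction from one explicit filtered change of
   basis: T_{2,2k+1} (x) T_{2,3} is isomorphic to T_{2,2k+3} (+) (S (x) (a -> b)), where
   S is a staircase and a -> b is the two-generator complex with d a = b.  The latter is
   contractible, and contractibility survives tensoring with anything; tensor products
   and direct sums preserve filtered homotopy equivalence, so the acyclic summands
   accumulate.  The mirror image is the dual complex, and dualizing reverses all maps,
   which gives the statement for -n T_{2,3}. *)

From Pilot Require Import Defs.
From HB Require Import structures.
From mathcomp Require Import all_boot all_order all_algebra zify.
From Stdlib Require Import FunctionalExtensionality.
Set Implicit Arguments. Unset Strict Implicit. Unset Printing Implicit Defensive.
Import Order.TTheory GRing.Theory Num.Theory.
Local Open Scope ring_scope.

(* A map from the free module on [T1] to the free module on [T2] is its matrix
   [f : T2 -> T1 -> R], with [f y x] the coefficient of [y] in the image of [x],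
   following the convention of [dif]. *)
Section Maps.
Variable R : comPzRingType.

Definition mulm (T1 T2 T3 : finType) (f : T3 -> T2 -> R) (g : T2 -> T1 -> R) :
  T3 -> T1 -> R := fun z x => \sum_y f z y * g y x.
Definition addm (T1 T2 : finType) (f g : T2 -> T1 -> R) : T2 -> T1 -> R :=
  fun y x => f y x + g y x.
Definition zerom (T1 T2 : finType) : T2 -> T1 -> R := fun _ _ => 0.
Definition onem (T : finType) : T -> T -> R := fun y x => (y == x)%:R.
Definition trm (T1 T2 : finType) (f : T2 -> T1 -> R) : T1 -> T2 -> R :=
  fun y x => f x y.
Definition tensm (A1 A2 B1 B2 : finType) (f : A2 -> A1 -> R) (g : B2 -> B1 -> R) :
  A2 * B2 -> A1 * B1 -> R := fun y x => f y.1 x.1 * g y.2 x.2.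
Definition dsumm (A1 A2 B1 B2 : finType) (f : A2 -> A1 -> R) (g : B2 -> B1 -> R) :
  A2 + B2 -> A1 + B1 -> R := fun y x =>
  match y, x with inl a, inl b => f a b | inr a, inr b => g a b | _, _ => 0 end.
Definition permm (T1 T2 : finType) (p : T1 -> T2) : T2 -> T1 -> R :=
  fun y x => (y == p x)%:R.
Arguments zerom {T1 T2}.
Arguments onem {T}.

Definition colm (T1 T2 : finType) (c : T1 -> seq (bool * T2)) : T2 -> T1 -> R :=
  fun y x => \sum_(p <- c x) (p.1 && (y == p.2))%:R.

Lemma mx_ext (T1 T2 : finType) (f g : T2 -> T1 -> R) :
  (forall y x, f y x = g y x) -> f = g.
Proof.
by move=> fg; do 2![apply: functional_extensionality => ?]; apply: fg.
Qed.

Section Laws.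
Variables T1 T2 T3 T4 : finType.
Implicit Types (f g h : T2 -> T1 -> R).

Lemma addmC f g : addm f g = addm g f.
Proof. by apply: mx_ext => y x; rewrite /addm addrC. Qed.

Lemma addmACA f g h (k : T2 -> T1 -> R) :
  addm (addm f g) (addm h k) = addm (addm f h) (addm g k).
Proof. by apply: mx_ext => y x; rewrite /addm addrACA. Qed.

Lemma add0m f : addm zerom f = f.
Proof. by apply: mx_ext => y x; rewrite /addm add0r. Qed.

Lemma addm0 f : addm f zerom = f.
Proof. by rewrite addmC add0m. Qed.

Lemma mulmA (f : T4 -> T3 -> R) (g : T3 -> T2 -> R) (h : T2 -> T1 -> R) :
  mulm f (mulm g h) = mulm (mulm f g) h.
Proof.
apply: mx_ext => z x; rewrite /mulm.
under eq_bigr => y _ do rewrite big_distrr /=.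
rewrite exchange_big /=; apply: eq_bigr => w _.
by rewrite big_distrl /=; apply: eq_bigr => y _; rewrite mulrA.
Qed.

Lemma mulmDr (f : T3 -> T2 -> R) g h : mulm f (addm g h) = addm (mulm f g) (mulm f h).
Proof.
by apply: mx_ext => z x; rewrite /mulm /addm -big_split; apply: eq_bigr => y _; rewrite mulrDr.
Qed.

Lemma mulmDl f g (h : T1 -> T3 -> R) : mulm (addm f g) h = addm (mulm f h) (mulm g h).
Proof.
by apply: mx_ext => z x; rewrite /mulm /addm -big_split; apply: eq_bigr => y _; rewrite mulrDl.
Qed.

Lemma mul1m f : mulm (@onem T2) f = f.
Proof.
apply: mx_ext => z x; rewrite /mulm (bigD1 z) //= big1 ?addr0 /onem ?eqxx ?mul1r // => y.
by rewrite eq_sym => /negbTE ->; rewrite mul0r.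
Qed.

Lemma mulm1 f : mulm f (@onem T1) = f.
Proof.
apply: mx_ext => z x; rewrite /mulm (bigD1 x) //= big1 ?addr0 /onem ?eqxx ?mulr1 // => y.
by move=> /negbTE ->; rewrite mulr0.
Qed.

Lemma mul0m (f : T2 -> T1 -> R) : mulm (@zerom T2 T3) f = zerom.
Proof. by apply: mx_ext => z x; rewrite /mulm big1 // => y _; rewrite mul0r. Qed.

Lemma mulm0 (f : T3 -> T2 -> R) : mulm f (@zerom T1 T2) = zerom.
Proof. by apply: mx_ext => z x; rewrite /mulm big1 // => y _; rewrite mulr0. Qed.

Lemma trm_mul (f : T3 -> T2 -> R) g : trm (mulm f g) = mulm (trm g) (trm f).
Proof. by apply: mx_ext => z x; apply: eq_bigr => y _; rewrite mulrC. Qed.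

Lemma trm1 : trm (@onem T1) = @onem T1.
Proof. by apply: mx_ext => z x; rewrite /trm /onem eq_sym. Qed.

Lemma mulm_permm (f : T3 -> T2 -> R) (p : T1 -> T2) :
  mulm f (permm p) = fun z x => f z (p x).
Proof.
apply: mx_ext => z x; rewrite /mulm /permm (bigD1 (p x)) //= eqxx mulr1 big1 ?addr0 //.
by move=> y /negbTE ->; rewrite mulr0.
Qed.

Lemma mul_permm f (p : T2 -> T3) (q : T3 -> T2) : cancel p q -> cancel q p ->
  mulm (permm p) f = fun z x => f (q z) x.
Proof.
move=> pK qK; apply: mx_ext => z x.
rewrite /mulm /permm (bigD1 (q z)) //= qK eqxx mul1r big1 ?addr0 // => y.
by case: (z =P p y) => [->|_]; rewrite ?mul0r // pK eqxx.
Qed.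

End Laws.

Section Tensor.
Variables A1 A2 A3 B1 B2 B3 : finType.

Lemma tensm_mul (f : A3 -> A2 -> R) (f' : A2 -> A1 -> R) (g : B3 -> B2 -> R)
  (g' : B2 -> B1 -> R) : mulm (tensm f g) (tensm f' g') = tensm (mulm f f') (mulm g g').
Proof.
apply: mx_ext => z x; rewrite /mulm /tensm /=.
rewrite -(pair_bigA _ (fun a b => f z.1 a * g z.2 b * (f' a x.1 * g' b x.2))) /=.
rewrite big_distrl /=; apply: eq_bigr => a _.
by rewrite big_distrr /=; apply: eq_bigr => b _; rewrite mulrACA.
Qed.

Lemma tensmDl (f f' : A2 -> A1 -> R) (g : B2 -> B1 -> R) :
  tensm (addm f f') g = addm (tensm f g) (tensm f' g).
Proof. by apply: mx_ext => y x; rewrite /tensm /addm mulrDl. Qed.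

Lemma tensmDr (f : A2 -> A1 -> R) (g g' : B2 -> B1 -> R) :
  tensm f (addm g g') = addm (tensm f g) (tensm f g').
Proof. by apply: mx_ext => y x; rewrite /tensm /addm mulrDr. Qed.

Lemma tensm1 : tensm (@onem A1) (@onem B1) = onem.
Proof.
apply: mx_ext => -[a b] [c d]; rewrite /tensm /onem /= xpair_eqE.
by case: (a == c); case: (b == d); rewrite ?mulr1 ?mulr0.
Qed.

Lemma tensm0l (g : B2 -> B1 -> R) : tensm (@zerom A1 A2) g = zerom.
Proof. by apply: mx_ext => y x; rewrite /tensm mul0r. Qed.

Lemma tensm0r (f : A2 -> A1 -> R) : tensm f (@zerom B1 B2) = zerom.
Proof. by apply: mx_ext => y x; rewrite /tensm mulr0. Qed.

Lemma dsumm_mul (f : A3 -> A2 -> R) (f' : A2 -> A1 -> R) (g : B3 -> B2 -> R)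
  (g' : B2 -> B1 -> R) : mulm (dsumm f g) (dsumm f' g') = dsumm (mulm f f') (mulm g g').
Proof.
apply: mx_ext => z x; rewrite /mulm big_sumType /=.
case: z => a; case: x => b /=.
- by rewrite [X in _ + X]big1 ?addr0 // => y _; rewrite mul0r.
- by rewrite !big1 ?addr0 // => y _; rewrite ?mul0r ?mulr0.
- by rewrite !big1 ?addr0 // => y _; rewrite ?mul0r ?mulr0.
- by rewrite [X in X + _]big1 ?add0r // => y _; rewrite mul0r.
Qed.

Lemma dsummD (f f' : A2 -> A1 -> R) (g g' : B2 -> B1 -> R) :
  addm (dsumm f g) (dsumm f' g') = dsumm (addm f f') (addm g g').
Proof. by apply: mx_ext => -[a|a] [b|b]; rewrite /addm /= ?addr0. Qed.

Lemma dsumm1 : dsumm (@onem A1) (@onem B1) = onem.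
Proof. by apply: mx_ext => -[a|a] [b|b]. Qed.

Lemma dsumm0 : dsumm (@zerom A1 A2) (@zerom B1 B2) = zerom.
Proof. by apply: mx_ext => -[a|a] [b|b]. Qed.

End Tensor.

Lemma mulm_colm (T1 T2 T3 : finType) (f : T3 -> T2 -> R) (c : T1 -> seq (bool * T2)) :
  mulm f (colm c) = fun z x => \sum_(p <- c x) p.1%:R * f z p.2.
Proof.
apply: mx_ext => z x; rewrite /mulm /colm; under eq_bigr => y _ do rewrite big_distrr.
rewrite exchange_big; apply: eq_bigr => -[[] t] _ /=; last first.
  by rewrite mul0r big1 // => y _; rewrite mulr0.
rewrite mul1r (bigD1 t) //= eqxx mulr1 big1 ?addr0 // => y /negbTE ->.
by rewrite mulr0.
Qed.

End Maps.

Arguments zerom {R T1 T2}.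
Arguments onem {R T}.
Arguments permm {R T1 T2}.
Arguments colm {R T1 T2}.

Notation F := 'F_2.

Lemma F2_addxx (x : F) : x + x = 0.
Proof. exact/addrr_pchar2/pchar_Fp. Qed.

Lemma addmm (T1 T2 : finType) (f : T2 -> T1 -> F) : addm f f = zerom.
Proof. by apply: mx_ext => y x; rewrite /addm F2_addxx. Qed.

Lemma compE (A B C : fcomplex) (f : gen C -> gen B -> F) (g : gen B -> gen A -> F) :
  Defs.comp f g = mulm f g.
Proof. by []. Qed.

Lemma dif_tens C D : dif (tens C D) = addm (tensm (dif C) onem) (tensm onem (dif D)).
Proof. by []. Qed.

Lemma dif_dsum C D : dif (dsum C D) = dsumm (dif C) (dif D).
Proof. by []. Qed.

Lemma dif_dual C : dif (dual C) = trm (dif C).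
Proof. by []. Qed.

(* [filtered_hom] with the U-exponent as an explicit witness, which [lia] can handle. *)
Definition filtered (C D : fcomplex) (d : int) (f : gen D -> gen C -> F) : Prop :=
  forall y x, f y x != 0 -> exists m : int,
    [/\ gr y - gr x - d = m * 2, 0 <= m & alex y - m <= alex x].
Arguments filtered : clear implicits.

Lemma filteredP C D d f : filtered_hom C D d f <-> filtered C D d f.
Proof.
split=> fC y x /fC.
- by case=> dv m0 al; exists ((gr y - gr x - d) %/ 2)%Z; rewrite divzK.
- by case=> m [e m0 al] /=; rewrite e mulzK //; split; rewrite ?dvdz_mull.
Qed.

Section Filtered.
Variables A B C C' D D' : fcomplex.

Lemma filtered_mul d1 d2 (f : gen C -> gen B -> F) (g : gen B -> gen A -> F) :
  filtered B C d1 f -> filtered A B d2 g -> filtered A C (d1 + d2) (mulm f g).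
Proof.
move=> ff fg z x sum_neq0.
have [y] : exists y, f z y * g y x != 0.
  apply/existsP; apply: contraNT sum_neq0; rewrite negb_exists => /forallP fg0.
  by apply/eqP/big1 => y _; apply/eqP; rewrite -[_ == 0]negbK fg0.
rewrite mulf_eq0 negb_or => /andP[/ff[m1 [? ? ?]] /fg[m2 [? ? ?]]].
by exists (m1 + m2); split; lia.
Qed.

Lemma filtered_add d (f g : gen D -> gen C -> F) :
  filtered C D d f -> filtered C D d g -> filtered C D d (addm f g).
Proof.
move=> ff fg y x; rewrite /addm; case: (f y x =P 0) => [->|/eqP/ff //].
by rewrite add0r => /fg.
Qed.

Lemma filtered0 d : filtered C D d zerom.
Proof. by move=> y x; rewrite eqxx. Qed.

Lemma filtered1 : filtered C C 0 onem.
Proof.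
move=> y x; rewrite /onem; case: (y =P x) => [-> _|]; last by rewrite eqxx.
by exists 0; split; lia.
Qed.

Lemma filtered_tensl d (f : gen C' -> gen C -> F) :
  filtered C C' d f -> filtered (tens C D) (tens C' D) d (tensm f onem).
Proof.
move=> ff [y1 y2] [x1 x2]; rewrite /tensm /onem /=.
case: (y2 =P x2) => [->|]; last by rewrite mulr0 eqxx.
by rewrite mulr1 => /ff[m [? ? ?]]; exists m; split; lia.
Qed.

Lemma filtered_tensr d (g : gen D' -> gen D -> F) :
  filtered D D' d g -> filtered (tens C D) (tens C D') d (tensm onem g).
Proof.
move=> fg [y1 y2] [x1 x2]; rewrite /tensm /onem /=.
case: (y1 =P x1) => [->|]; last by rewrite mul0r eqxx.
by rewrite mul1r => /fg[m [? ? ?]]; exists m; split; lia.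
Qed.

Lemma filtered_dsum d (f : gen C' -> gen C -> F) (g : gen D' -> gen D -> F) :
  filtered C C' d f -> filtered D D' d g -> filtered (dsum C D) (dsum C' D') d (dsumm f g).
Proof. by move=> ff fg [y|y] [x|x] //=; rewrite ?eqxx //; [apply: ff | apply: fg]. Qed.

Lemma filtered_dual d (f : gen D -> gen C -> F) :
  filtered C D d f -> filtered (dual D) (dual C) d (trm f).
Proof. by move=> ff y x /ff[m [? ? ?]]; exists m; split => /=; lia. Qed.

End Filtered.

Arguments filtered0 : clear implicits.
Arguments filtered1 : clear implicits.

(* In characteristic 2, [u + 1 = d h + h d] says that [u] is homotopic to the identity. *)
Definition htpy_id (C : fcomplex) (u h : gen C -> gen C -> F) : Prop :=
  addm u onem = addm (mulm (dif C) h) (mulm h (dif C)).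
Arguments htpy_id : clear implicits.

Definition hequiv (C D : fcomplex) : Prop :=
  exists (f : gen D -> gen C -> F) (g : gen C -> gen D -> F)
         (hC : gen C -> gen C -> F) (hD : gen D -> gen D -> F),
  [/\ filtered C D 0 f, filtered D C 0 g,
      mulm f (dif C) = mulm (dif D) f & mulm g (dif D) = mulm (dif C) g] /\
  [/\ filtered C C 1 hC, filtered D D 1 hD, htpy_id C (mulm g f) hC &
      htpy_id D (mulm f g) hD].

Lemma hequivP C D : hequiv C D -> filt_htpy_equiv C D.
Proof.
case=> f [g [hC [hD [[ff fg cf cg] [fhC fhD hgf hfg]]]]].
exists f, g, hC, hD; split; split; rewrite ?filteredP // => z x; rewrite !compE.
- by rewrite cf.
- by rewrite cg.
- by rewrite -[LHS]/(addm _ _ z x) hgf.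
- by rewrite -[LHS]/(addm _ _ z x) hfg.
Qed.

Lemma hequiv_sym C D : hequiv C D -> hequiv D C.
Proof. by case=> f [g [hC [hD [[? ? ? ?] [? ? ? ?]]]]]; exists g, f, hD, hC. Qed.

Lemma htpy_id_conj C D (f : gen D -> gen C -> F) (g : gen C -> gen D -> F) v hC hD :
  mulm f (dif C) = mulm (dif D) f -> mulm g (dif D) = mulm (dif C) g ->
  htpy_id C (mulm g f) hC -> htpy_id D v hD ->
  htpy_id C (mulm g (mulm v f)) (addm hC (mulm g (mulm hD f))).
Proof.
move=> cf cg hgf hv; rewrite /htpy_id mulmDr mulmDl addmACA -hgf.
have -> : mulm (dif C) (mulm g (mulm hD f)) = mulm g (mulm (mulm (dif D) hD) f).
  by rewrite mulmA -cg -!mulmA.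
have -> : mulm (mulm g (mulm hD f)) (dif C) = mulm g (mulm (mulm hD (dif D)) f).
  by rewrite -!mulmA cf.
rewrite -mulmDr -mulmDl -hv mulmDl mulmDr mul1m.
by rewrite [addm (mulm g _) (mulm g f)]addmC addmACA addmm add0m addmC.
Qed.

Lemma hequiv_trans C D E : hequiv C D -> hequiv D E -> hequiv C E.
Proof.
case=> f1 [g1 [h1 [k1 [[ff1 fg1 cf1 cg1] [fh1 fk1 hgf1 hfg1]]]]].
case=> f2 [g2 [h2 [k2 [[ff2 fg2 cf2 cg2] [fh2 fk2 hgf2 hfg2]]]]].
exists (mulm f2 f1), (mulm g1 g2), (addm h1 (mulm g1 (mulm h2 f1))),
       (addm k2 (mulm f2 (mulm k1 g2))); split; split.
- exact: filtered_mul ff2 ff1.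
- exact: filtered_mul fg1 fg2.
- by rewrite -mulmA cf1 !mulmA cf2.
- by rewrite -mulmA cg2 !mulmA cg1.
- by apply: filtered_add => //; have := filtered_mul fg1 (filtered_mul fh2 ff1).
- by apply: filtered_add => //; have := filtered_mul ff2 (filtered_mul fk1 fg2).
- by rewrite -mulmA [mulm g2 _]mulmA; apply: htpy_id_conj.
- by rewrite -mulmA [mulm f1 _]mulmA; apply: htpy_id_conj.
Qed.

Lemma hequiv_of_iso C D (f : gen D -> gen C -> F) (g : gen C -> gen D -> F) :
  filtered C D 0 f -> filtered D C 0 g -> mulm f (dif C) = mulm (dif D) f ->
  mulm g f = onem -> mulm f g = onem -> hequiv C D.
Proof.
move=> ff fg cf gK fK; exists f, g, zerom, zerom; split; split => //.
- by rewrite -[LHS]mulm1 -fK !mulmA -[mulm (mulm g _) f]mulmA -cf !mulmA gK mul1m.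
- by rewrite /htpy_id gK mulm0 mul0m addmm addm0.
- by rewrite /htpy_id fK mulm0 mul0m addmm addm0.
Qed.

Lemma hequiv_relabel C D (p : gen C -> gen D) (q : gen D -> gen C) :
  cancel p q -> cancel q p -> (forall x, gr (p x) = gr x) ->
  (forall x, alex (p x) = alex x) ->
  (forall y x, dif D (p y) (p x) = dif C y x) -> hequiv C D.
Proof.
move=> pK qK gr_p alex_p dif_p.
have gr_q x : gr (q x) = gr x by rewrite -[in RHS](qK x) gr_p.
have alex_q x : alex (q x) = alex x by rewrite -[in RHS](qK x) alex_p.
apply: (@hequiv_of_iso C D (permm p) (permm q)).
- move=> y x; rewrite /permm; case: (y =P p x) => [-> _|]; last by rewrite eqxx.
  by exists 0; rewrite gr_p alex_p; split; lia.
- move=> y x; rewrite /permm; case: (y =P q x) => [-> _|]; last by rewrite eqxx.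
  by exists 0; rewrite gr_q alex_q; split; lia.
- by rewrite mulm_permm (mul_permm _ pK qK); apply: mx_ext => y x; rewrite -dif_p qK.
- by rewrite mulm_permm; apply: mx_ext => y x; rewrite /permm pK.
- by rewrite mulm_permm; apply: mx_ext => y x; rewrite /permm qK.
Qed.

Lemma hequiv_tensl C C' D : hequiv C C' -> hequiv (tens C D) (tens C' D).
Proof.
case=> f [g [h [k [[ff fg cf cg] [fh fk hgf hfg]]]]].
exists (tensm f onem), (tensm g onem), (tensm h onem), (tensm k onem).
split; split; try exact: filtered_tensl.
- by rewrite !dif_tens mulmDr mulmDl !tensm_mul !mul1m !mulm1 cf.
- by rewrite !dif_tens mulmDr mulmDl !tensm_mul !mul1m !mulm1 cg.
- rewrite /htpy_id !dif_tens !mulmDr !mulmDl !tensm_mul !mul1m !mulm1 -tensm1 -tensmDl hgf.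
  by rewrite tensmDl addmACA addmm addm0.
- rewrite /htpy_id !dif_tens !mulmDr !mulmDl !tensm_mul !mul1m !mulm1 -tensm1 -tensmDl hfg.
  by rewrite tensmDl addmACA addmm addm0.
Qed.

Lemma hequiv_dsuml C C' A : hequiv C C' -> hequiv (dsum C A) (dsum C' A).
Proof.
case=> f [g [h [k [[ff fg cf cg] [fh fk hgf hfg]]]]].
exists (dsumm f onem), (dsumm g onem), (dsumm h zerom), (dsumm k zerom).
split; split.
- exact: filtered_dsum ff (filtered1 A).
- exact: filtered_dsum fg (filtered1 A).
- by rewrite !dif_dsum !dsumm_mul !mul1m !mulm1 cf.
- by rewrite !dif_dsum !dsumm_mul !mul1m !mulm1 cg.
- exact: filtered_dsum fh (filtered0 A A 1).
- exact: filtered_dsum fk (filtered0 A A 1).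
- by rewrite /htpy_id !dif_dsum !dsumm_mul -dsumm1 !dsummD hgf mul1m mulm0 mul0m addmm addm0.
- by rewrite /htpy_id !dif_dsum !dsumm_mul -dsumm1 !dsummD hfg mul1m mulm0 mul0m addmm addm0.
Qed.

Lemma hequiv_dual C D : hequiv C D -> hequiv (dual C) (dual D).
Proof.
case=> f [g [h [k [[ff fg cf cg] [fh fk hgf hfg]]]]].
exists (trm g), (trm f), (trm h), (trm k); split; split; try exact: filtered_dual.
- by rewrite !dif_dual -(trm_mul (dif C) g) -(trm_mul g (dif D)) cg.
- by rewrite !dif_dual -(trm_mul (dif D) f) -(trm_mul f (dif C)) cf.
- rewrite /htpy_id !dif_dual -(trm_mul g f) -(trm_mul h (dif C)) -(trm_mul (dif C) h).
  by rewrite -trm1 -[addm (trm _) (trm onem)]/(trm (addm _ onem)) hgf addmC.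
- rewrite /htpy_id !dif_dual -(trm_mul f g) -(trm_mul k (dif D)) -(trm_mul (dif D) k).
  by rewrite -trm1 -[addm (trm _) (trm onem)]/(trm (addm _ onem)) hfg addmC.
Qed.

Definition contractible (C : fcomplex) : Prop :=
  exists h : gen C -> gen C -> F, addm (mulm (dif C) h) (mulm h (dif C)) = onem.

Lemma contractible_acyclic C : contractible C -> acyclic C.
Proof.
case=> h hE v dv; pose V : gen C -> unit -> F := fun y _ => v y.
have dV0 : mulm (dif C) V = zerom by apply: mx_ext => z x; apply: dv.
exists (fun x => mulm h V x tt) => z.
have VE : V = mulm (dif C) (mulm h V).
  by rewrite -[LHS]mul1m -hE mulmDl -!mulmA dV0 mulm0 addm0.
exact: (congr1 (fun M => M z tt) VE).
Qed.

Lemma contractible_tensl C D : contractible C -> contractible (tens C D).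
Proof.
case=> h hE; exists (tensm h onem).
rewrite dif_tens mulmDr mulmDl !tensm_mul !mul1m !mulm1.
by rewrite addmACA addmm addm0 -tensmDl hE tensm1.
Qed.

Lemma contractible_tensr C D : contractible D -> contractible (tens C D).
Proof.
case=> h hE; exists (tensm onem h).
rewrite dif_tens mulmDr mulmDl !tensm_mul !mul1m !mulm1.
by rewrite addmACA addmm add0m -tensmDr hE tensm1.
Qed.

Lemma contractible_dsum C D : contractible C -> contractible D -> contractible (dsum C D).
Proof.
by case=> h hE [k kE]; exists (dsumm h k); rewrite dif_dsum !dsumm_mul dsummD hE kE dsumm1.
Qed.

Lemma contractible_dual C : contractible C -> contractible (dual C).
Proof.
case=> h hE; exists (trm h).
rewrite dif_dual -(trm_mul h (dif C)) -(trm_mul (dif C) h) addmC.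
by rewrite -[addm (trm _) _]/(trm (addm _ _)) hE trm1.
Qed.

Definition cfk (C : fcomplex) : Prop :=
  filtered C C (-1) (dif C) /\ mulm (dif C) (dif C) = zerom.

Lemma cfkP C : cfk C -> is_cfk C.
Proof. by case=> fd dd; split=> [|z x]; rewrite ?filteredP // compE dd. Qed.

Lemma cfk_tens C D : cfk C -> cfk D -> cfk (tens C D).
Proof.
case=> fdC ddC [fdD ddD]; split.
- by apply: filtered_add; [apply: filtered_tensl | apply: filtered_tensr].
- rewrite dif_tens mulmDr !mulmDl !tensm_mul !mul1m !mulm1 ddC ddD tensm0l tensm0r.
  by rewrite add0m addm0 addmm.
Qed.

Lemma cfk_dsum C D : cfk C -> cfk D -> cfk (dsum C D).
Proof.
case=> fdC ddC [fdD ddD]; split; first exact: filtered_dsum.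
by rewrite dif_dsum dsumm_mul ddC ddD dsumm0.
Qed.

Lemma cfk_dual C : cfk C -> cfk (dual C).
Proof.
case=> fd dd; split; first exact: filtered_dual.
by rewrite dif_dual -(trm_mul (dif C) (dif C)) dd.
Qed.

Definition stair (N : nat) (a : int) : fcomplex :=
  @FComplex 'I_N
    (fun s => - (nat_of_ord s)%:Z)
    (fun s => a - (nat_of_ord s)%:Z)
    (fun y x => if odd x && ((y.+1 == x :> nat) || (y == x.+1 :> nat)) then 1 else 0).

Lemma cfk_stair N a : cfk (stair N a).
Proof.
split.
- move=> y x /=; case: ifP => [/andP[odd_x /orP[]] /eqP yx _|]; last by rewrite eqxx.
  + by exists 1; split; lia.
  + by exists 0; split; lia.
- apply: mx_ext => z x; rewrite /mulm big1 // => y _ /=.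
  by case: ifP => ?; case: ifP => ?; rewrite ?mulr0 ?mul0r //; exfalso; lia.
Qed.

Definition arrow : fcomplex :=
  @FComplex bool (fun u => if u then -2 else -1) (fun u => if u then -1 else 0)
    (fun y x => if y && ~~ x then 1 else 0).

Lemma cfk_arrow : cfk arrow.
Proof.
split; first by move=> [] [] //= _; exists 0.
by apply: mx_ext => z x; rewrite /mulm !big_bool; case: z; case: x;
  rewrite /= ?mulr0 ?mul0r ?addr0.
Qed.

Lemma contractible_arrow : contractible arrow.
Proof.
exists (fun y x => if ~~ y && x then 1 else 0).
by apply: mx_ext => z x; rewrite /mulm /addm /onem !big_bool; case: z; case: x;
  rewrite /= ?mulr0 ?mul0r ?mulr1 ?addr0 ?add0r.
Qed.

Definition empty_cx : fcomplex :=
  @FComplex void (fun _ => 0) (fun _ => 0) (fun _ _ => 0).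

Lemma cfk_empty : cfk empty_cx.
Proof. by split; [case | apply: mx_ext; case]. Qed.

Lemma contractible_empty : contractible empty_cx.
Proof. by exists zerom; apply: mx_ext; case. Qed.

Lemma tens_unit C : hequiv (tens unit_cx C) C.
Proof.
apply: (@hequiv_relabel (tens unit_cx C) C (fun x => x.2) (fun x => (tt, x)))
  => [[[] x]|x|x|x|[[] y] [[] x]] //=; rewrite ?add0r //.
by rewrite mul0r add0r mul1r.
Qed.

Lemma dsum_empty C : hequiv C (dsum C empty_cx).
Proof.
apply: (@hequiv_relabel C (dsum C empty_cx) inl
  (fun y => match y with inl x => x | inr v => match v with end end)) => //.
by case=> // [[]].
Qed.

Lemma dual_unit : hequiv unit_cx (dual unit_cx).
Proof. by apply: (@hequiv_relabel unit_cx (dual unit_cx) id id) => //= x; rewrite oppr0. Qed.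

Lemma dual_tens C D : hequiv (tens (dual C) (dual D)) (dual (tens C D)).
Proof.
apply: (@hequiv_relabel (tens (dual C) (dual D)) (dual (tens C D)) id id) => //= [x|x|y x].
- by rewrite opprD.
- by rewrite opprD.
- by rewrite [y.2 == _]eq_sym [y.1 == _]eq_sym.
Qed.

Lemma dual_dsum C D : hequiv (dual (dsum C D)) (dsum (dual C) (dual D)).
Proof.
by apply: (@hequiv_relabel (dual (dsum C D)) (dsum (dual C) (dual D)) id id)
  => // [[]|[]|[] y []].
Qed.

Lemma tens_dsumDl C A D : hequiv (tens (dsum C A) D) (dsum (tens C D) (tens A D)).
Proof.
apply: (@hequiv_relabel (tens (dsum C A) D) (dsum (tens C D) (tens A D))
  (fun x => match x with (inl c, t) => inl (c, t) | (inr a, t) => inr (a, t) end)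
  (fun y => match y with inl (c, t) => (inl c, t) | inr (a, t) => (inr a, t) end))
  => [[[c|a] t]|[[c t]|[a t]]|[[c|a] t]|[[c|a] t]|[[c|a] t] [[c'|a'] t']] //=.
all: by rewrite ?mul0r ?add0r.
Qed.

Lemma dsumA C D E : hequiv (dsum (dsum C D) E) (dsum C (dsum D E)).
Proof.
apply: (@hequiv_relabel (dsum (dsum C D) E) (dsum C (dsum D E))
  (fun x => match x with inl (inl c) => inl c | inl (inr d) => inr (inl d)
                        | inr e => inr (inr e) end)
  (fun y => match y with inl c => inl (inl c) | inr (inl d) => inl (inr d)
                        | inr (inr e) => inr e end))
  => [[[c|d]|e]|[c|[d|e]]|[[c|d]|e]|[[c|d]|e]|[[c|d]|e] [[c'|d']|e']] //.
Qed.

(* Entries of explicitly given matrices are compared by expanding the sums, which are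
   finite and explicit: both sides become casts of sums of booleans, equal in F_2 iff the
   sums have the same parity, which [lia] decides once the [inord]s are eliminated. *)
Lemma natr_F2_odd (a b : nat) : odd a = odd b -> (a%:R : F) = b%:R.
Proof.
have pr2 : prime 2 by [].
by move=> ab; rewrite -(Fp_nat_mod pr2 a) -(Fp_nat_mod pr2 b) !modn2 ab.
Qed.

Lemma natrb_neq0 (b : bool) : (b%:R : F) != 0 -> b.
Proof. by case: b; rewrite ?eqxx. Qed.

Lemma if_natr (b : bool) : (if b then 1 else 0 : F) = b%:R.
Proof. by case: b. Qed.

Lemma mulr_natb (b c : bool) : (b%:R * c%:R : F) = (b && c)%:R.
Proof. by rewrite -natrM mulnb. Qed.

Lemma eq_inl (A B : eqType) (a b : A) : (@inl A B a == inl b) = (a == b). Proof. by []. Qed.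
Lemma eq_inr (A B : eqType) (a b : B) : (@inr A B a == inr b) = (a == b). Proof. by []. Qed.
Lemma eq_inlr (A B : eqType) (a : A) (b : B) : (inl a == inr b) = false. Proof. by []. Qed.
Lemma eq_inrl (A B : eqType) (a : A) (b : B) : (inr b == inl a) = false. Proof. by []. Qed.
Lemma eqbE (a b : bool) : (a == b) = (a && b || ~~ a && ~~ b). Proof. by case: a; case: b. Qed.

Ltac simpl_closed_nat := let litb e := let v := eval vm_compute in e in
  match v with true => change e with true | false => change e with false end in
  repeat match goal with
  | |- context [?a == ?b] => litb (a == b)
  | |- context [odd ?a] => litb (odd a)
  | |- context [(?a <= ?b)%N] => litb (a <= b)%N
  end;
  rewrite ?eqxx ?ltnn ?odd_double ?oddS ?odd_double ?negbK;
  rewrite ?andbF ?andFb ?andbT ?andTb ?orbF ?orFb ?orbT ?orTb ?add0n ?addn0.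

(* Replaces each [inord a], innermost first, by [a] when [a] is in range and by a fresh
   bounded variable otherwise. *)
Ltac elim_inord := repeat match goal with |- context [nat_of_ord (@inord ?n ?a)] =>
  lazymatch a with context [@inord _ _] => fail | _ => idtac end;
  first [ rewrite (@inordK n a); last by lia
        | case: (leqP a n) => ?;
          [ rewrite (@inordK n a); last by rewrite ltnS
          | let x := fresh "x" in
            have := ltn_ord (@inord n a); set x := nat_of_ord (@inord n a);
            clearbody x; move=> ? ] ] end.

Ltac F2_normalize :=
  rewrite /colm /onem /= ?big_cons ?big_nil /= ?if_natr;
  rewrite ?mulr_natb ?addr0 ?add0r -?natrD ?mulr_natb;
  rewrite ?mulr1 ?mulr0 ?mul1r ?mul0r ?addr0 ?add0r ?natrD ?mulrDr ?mulrDl ?mulr_natb;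
  rewrite ?mulr1 ?mulr0 ?mul1r ?mul0r ?addr0 ?add0r -?natrD;
  rewrite ?eq_inl ?eq_inr ?eq_inlr ?eq_inrl ?xpair_eqE ?eqbE -?val_eqE /=;
  simpl_closed_nat.

Ltac F2_to_parity := rewrite -?natrD; try rewrite -(mulr0n (1 : F));
  apply: natr_F2_odd; elim_inord; simpl_closed_nat.

Ltac F2_parity := F2_to_parity; lia.

(* For parity arguments beyond [lia]: case analysis on the values of [i] in the goal and
   on the parity of [r]. *)
Ltac F2_parity_split i r := F2_to_parity;
  repeat match goal with |- context [i == ?e] =>
    let E := fresh "E" in case: (eqVneq i e) => [E|?]; [rewrite E|] end;
  simpl_closed_nat; case: (boolP (odd r)) => ?; simpl_closed_nat; lia.

Ltac case_torus_split_gen := case=> [[? ?]|[[? ?] []]].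

Ltac case_torus_trefoil_gen := case=> [[? ?] [[|[|[|//]]] ?]].

Section TorusTimesTrefoil.
Variable K : nat.
Local Open Scope nat_scope.
Local Notation m := K.+1.*2.

Definition torus_trefoil := tens (torus2 K.+1) trefoil.
Definition torus_split := dsum (torus2 K.+2) (tens (stair m K.+1) arrow).

Local Notation xy a b := (@inord m a, @inord 2 b).
Local Notation z a := (inl (@inord m.+2 a)).
Local Notation w a u := (inr (@inord K.*2.+1 a, u)).

Definition dN_col (v : gen torus_split) : seq (bool * gen torus_split) :=
  match v with
  | inl r => [:: (odd r, z r.-1); (odd r && (r.+1 < m.+3), z r.+1)]
  | inr (s, u) => [:: (odd s, w s.-1 u); (odd s && (s.+1 < m), w s.+1 u); (~~ u, w s true)]
  end.

(* The change of basis [psi], by columns: [z r] goes to [xy r 0] for [r <= m] and the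
   two extra generators [z m.+1], [z m.+2] to [xy m 1], [xy m 2]; the generators
   [w s false], [w s true] of the acyclic summand go to [xy s 1], [xy s 2] plus the
   correction terms that make [psi] a chain map.  [psi] and its inverse [phi] are also
   given entrywise below; a product is computed with the columns of one factor and the
   entries of the other, so that every summand is a closed boolean formula. *)
Definition psi_col (v : gen torus_split) : seq (bool * gen torus_trefoil) :=
  match v with
  | inl r => [:: (r <= m, xy r 0); (r == m.+1 :> nat, xy m 1); (r == m.+2 :> nat, xy m 2)]
  | inr (s, false) => [:: (true, xy s 1); (~~ odd s, xy s.+1 0)]
  | inr (s, true) => [:: (true, xy s 2); (s.+2 <= m, xy s.+2 0); (s.+1 == m, xy m 1)]
  end.

Definition phi_col (o : gen torus_trefoil) : seq (bool * gen torus_split) :=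
  let i := nat_of_ord o.1 in let t := nat_of_ord o.2 in
  [:: (t == 0, z i);
      ((i == m) && (t == 1), z m.+1);
      ((i == m) && (t == 2), z m.+2);
      ([&& i < m, t == 1 & ~~ odd i], z i.+1);
      ((i.+2 <= m) && (t == 2), z i.+2);
      ((i.+1 == m) && (t == 2), z m.+1);
      ((i < m) && (t == 1), w i false);
      ((i < m) && (t == 2), w i true)].

Definition psi : gen torus_trefoil -> gen torus_split -> F := fun o v =>
  let i := nat_of_ord o.1 in let t := nat_of_ord o.2 in
  (match v with
   | inl r => [|| (r <= m) && (i == r) && (t == 0),
                  (r == m.+1 :> nat) && (i == m) && (t == 1) |
                  (r == m.+2 :> nat) && (i == m) && (t == 2)]
   | inr (s, false) => (i == s) && (t == 1) || ~~ odd s && (i == s.+1) && (t == 0)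
   | inr (s, true) => [|| (i == s) && (t == 2),
                  (s.+2 <= m) && (i == s.+2) && (t == 0) |
                  (s.+1 == m) && (i == m) && (t == 1)]
   end)%:R.

Definition phi : gen torus_split -> gen torus_trefoil -> F := fun v o =>
  let i := nat_of_ord o.1 in let t := nat_of_ord o.2 in
  (match v with
   | inl r => [|| (t == 0) && (r == i :> nat),
                  (i == m) && (t == 1) && (r == m.+1 :> nat),
                  (i == m) && (t == 2) && (r == m.+2 :> nat),
                  (i < m) && (t == 1) && ~~ odd i && (r == i.+1 :> nat),
                  (i.+2 <= m) && (t == 2) && (r == i.+2 :> nat) |
                  (i.+1 == m) && (t == 2) && (r == m.+1 :> nat)]
   | inr (s, u) => (i == s) && (if u then t == 2 else t == 1)
   end)%:R.

Lemma filtered_psi : filtered torus_split torus_trefoil 0 psi.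
Proof.
move=> [[i ?] [[|[|[|//]]] ?]] [[r ?]|[[s ?] []]] /natrb_neq0 /= ?; exists 0%R; split; lia.
Qed.

Lemma filtered_phi : filtered torus_trefoil torus_split 0 phi.
Proof.
move=> [[r ?]|[[s ?] []]] [[i ?] [[|[|[|//]]] ?]] /natrb_neq0 /= ?; exists 0%R; split; lia.
Qed.

Lemma psi_colE : psi = colm psi_col.
Proof.
apply: mx_ext; case_torus_trefoil_gen; case_torus_split_gen;
  rewrite /psi /psi_col; F2_normalize; F2_parity.
Qed.

Lemma phi_colE : phi = colm phi_col.
Proof.
apply: mx_ext; case_torus_split_gen; case_torus_trefoil_gen;
  rewrite /phi /phi_col; F2_normalize; F2_parity.
Qed.

Lemma dif_torus_split : dif torus_split = colm dN_col.
Proof.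
apply: mx_ext; case_torus_split_gen; case_torus_split_gen;
  rewrite /dN_col; F2_normalize; F2_parity.
Qed.

Lemma phi_psi : mulm phi psi = onem.
Proof.
rewrite psi_colE mulm_colm; apply: mx_ext; case_torus_split_gen; case_torus_split_gen;
  rewrite /psi_col /phi; F2_normalize; F2_parity.
Qed.

Lemma psi_phi : mulm psi phi = onem.
Proof.
rewrite phi_colE mulm_colm; apply: mx_ext; case_torus_trefoil_gen; case_torus_trefoil_gen;
  rewrite /phi_col /psi; F2_normalize; F2_parity.
Qed.

Lemma psi_chain : mulm psi (dif torus_split) = mulm (dif torus_trefoil) psi.
Proof.
rewrite dif_torus_split [in RHS]psi_colE !mulm_colm.
apply: mx_ext => -[[i ?] [[|[|[|//]]] ?]] [[r ?]|[[r ?] []]];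
  rewrite /dN_col /psi_col /psi; F2_normalize; F2_parity_split i r.
Qed.

End TorusTimesTrefoil.

Lemma torus_trefoil_split K :
  hequiv (tens (torus2 K.+1) trefoil) (dsum (torus2 K.+2) (tens (stair K.+1.*2 K.+1) arrow)).
Proof.
exact: hequiv_sym (hequiv_of_iso (@filtered_psi K) (@filtered_phi K) (@psi_chain K)
  (@phi_psi K) (@psi_phi K)).
Qed.

Lemma nT23_split n : exists A, [/\ cfk A, contractible A &
  hequiv (CFK_nT23 n.+1) (dsum (CFK_T2 n.+1) A)].
Proof.
elim: n => [|n [A [cfkA contrA eqA]]].
  exists empty_cx; split; [exact: cfk_empty | exact: contractible_empty |].
  exact: hequiv_trans (tens_unit _) (dsum_empty _).
exists (dsum (tens (stair n.+1.*2 n.+1) arrow) (tens A trefoil)); split.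
- exact: cfk_dsum (cfk_tens (cfk_stair _ _) cfk_arrow) (cfk_tens cfkA (cfk_stair _ _)).
- exact: contractible_dsum (contractible_tensr _ contractible_arrow)
    (contractible_tensl _ contrA).
- apply: hequiv_trans (hequiv_tensl trefoil eqA) _.
  apply: hequiv_trans (tens_dsumDl _ _ _) _.
  apply: hequiv_trans (hequiv_dsuml _ (torus_trefoil_split n)) _.
  exact: dsumA.
Qed.

Lemma mnT23_dual n : hequiv (CFK_mnT23 n) (dual (CFK_nT23 n)).
Proof.
elim: n => [|n IH]; first exact: dual_unit.
exact: hequiv_trans (hequiv_tensl (dual trefoil) IH) (dual_tens _ _).
Qed.

Lemma mnT23_split n : exists A, [/\ cfk A, contractible A &
  hequiv (CFK_mnT23 n.+1) (dsum (CFK_mT2 n.+1) A)].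
Proof.
have [A [cfkA contrA eqA]] := nT23_split n.
exists (dual A); split; [exact: cfk_dual | exact: contractible_dual |].
exact: hequiv_trans (hequiv_trans (mnT23_dual _) (hequiv_dual eqA)) (dual_dsum _ _).
Qed.

Theorem lemma7p2 (n : nat) (hn : (0 < n)%N) :
  (exists A : fcomplex, [/\ is_cfk A, acyclic A &
     filt_htpy_equiv (CFK_nT23 n) (dsum (CFK_T2 n) A)]) /\
  (exists A : fcomplex, [/\ is_cfk A, acyclic A &
     filt_htpy_equiv (CFK_mnT23 n) (dsum (CFK_mT2 n) A)]).
Proof.
case: n hn => // n _; split.
- have [A [cfkA contrA eqA]] := nT23_split n.
  by exists A; split; [apply: cfkP | apply: contractible_acyclic | apply: hequivP].
- have [A [cfkA contrA eqA]] := mnT23_split n.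
  by exists A; split; [apply: cfkP | apply: contractible_acyclic | apply: hequivP].
Qed.
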